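(* Let $P,Q\subseteq\mathbb R^n$ be nonzero polyhedral cones. Consider the following cutting-plane iteration (run without stopping): choose $u^1\in P\cap S_n$ and $v^1\in\mathtt{Proj}_{Q\cap S_n}(u^1)$; for $k=1,2,\dots$, let $(u^{k+1},r^{k+1})$ be a global solution of $$\min_{(u,r)\in\mathbb R^{n+1}} r\quad\text{s.t.}\quad u\in P,\ \|u\|^2=1,\ \langle v^j,u\rangle\le r\ (j=1,\dots,k),$$ and let $v^{k+1}\in\mathtt{Proj}_{Q\cap S_n}(u^{k+1})$. Then every cluster point $\bar u$ of $\{u^k\}$ is a global solution of $\min_{u\in P\cap S_n}F_Q(u)$; for any $\bar v\in\mathtt{Proj}_{Q\cap S_n}(\bar u)$, the pair $(\bar u,\bar v)$ solves the max-min problem defining $\Theta(P,Q)$ (i.e. $\bar u$ attains the outer maximum, $\bar v$ attains the inner minimum for $\bar u$, and $\arccos\langle\bar u,\bar v\rangle=\Theta(P,Q)$); and $\lim_k r^k=\cos\Theta(P,Q)$.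
   Context: $S_n$ is the unit sphere of $\mathbb R^n$. A polyhedral cone is a finitely generated cone $\{Gx:x\ge0\}$. $\mathtt{Proj}_X(u):=\arg\min_{x\in X}\|x-u\|$. $F_Q(u):=\max_{v\in Q\cap S_n}\langle u,v\rangle$ and $\Theta(P,Q):=\max_{u\in P\cap S_n}\min_{v\in Q\cap S_n}\arccos\langle u,v\rangle$ (so $\cos\Theta(P,Q)=\min_{u\in P\cap S_n}F_Q(u)$). *)

From HB Require Import structures.
From mathcomp Require Import all_boot all_order all_algebra.
From mathcomp Require Import all_classical all_reals all_analysis.
Set Implicit Arguments. Unset Strict Implicit. Unset Printing Implicit Defensive.
Import Order.TTheory GRing.Theory Num.Theory.
Local Open Scope classical_set_scope.
Local Open Scope ring_scope.

Section Defs.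
Variables (R : realType) (n : nat).

Definition dotv (u v : 'cV[R]_n) : R := \sum_(i < n) u i 0 * v i 0.
Definition vnorm (u : 'cV[R]_n) : R := Num.sqrt (dotv u u).

Definition sphere : set 'cV[R]_n := [set u | vnorm u = 1].

Definition polyhedral_cone (P : set 'cV[R]_n) : Prop :=
  exists (m : nat) (G : 'M[R]_(n, m)),
    P = [set G *m x | x in [set x : 'cV[R]_m | forall i, 0 <= x i 0]].

Definition isProj (X : set 'cV[R]_n) (u x : 'cV[R]_n) : Prop :=
  X x /\ forall y, X y -> vnorm (x - u) <= vnorm (y - u).

Definition FQ (Q : set 'cV[R]_n) (u : 'cV[R]_n) : R :=
  sup [set dotv u v | v in Q `&` sphere].

Definition inner_angle (Q : set 'cV[R]_n) (u : 'cV[R]_n) : R :=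
  inf [set acos (dotv u v) | v in Q `&` sphere].

Definition Theta (P Q : set 'cV[R]_n) : R :=
  sup [set inner_angle Q u | u in P `&` sphere].

Definition cluster_point (uk : nat -> 'cV[R]_n) (ub : 'cV[R]_n) : Prop :=
  forall (e : R) (N : nat), 0 < e -> exists k, (N <= k)%N /\ vnorm (uk k - ub) < e.

(* feasible set of the subproblem at step k (cuts j = 0..k, i.e. the paper's
   j = 1..k shifted by one) *)
Definition cp_feasible (P : set 'cV[R]_n) (vk : nat -> 'cV[R]_n) (k : nat)
  (u : 'cV[R]_n) (r : R) : Prop :=
  P u /\ vnorm u ^+ 2 = 1 /\ forall j, (j <= k)%N -> dotv (vk j) u <= r.

Definition cp_solution (P : set 'cV[R]_n) (vk : nat -> 'cV[R]_n) (k : nat)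
  (u : 'cV[R]_n) (r : R) : Prop :=
  cp_feasible P vk k u r /\
  forall u' r', cp_feasible P vk k u' r' -> r <= r'.

End Defs.
Arguments sphere {R n}.

(* Polyhedral cones are closed: a Caratheodory reduction removes generators
   along nonnegative kernel vectors until the remaining ones admit none, and
   then the coefficients of any convergent sequence in the cone stay bounded.
   Hence P, Q and the spheres in them are compact, so F_Q is attained, and for
   unit vectors the projection onto Q ∩ S_n maximises <u, .>.
   Since (u, F_Q(u)) is feasible for every subproblem, r^(k+1) <= F_Q(u) on
   P ∩ S_n, and r^k is nondecreasing.  If u^k1 and u^k2 (k1 < k2) are both near
   a cluster point ub, then F_Q(ub) ~ <u^k1, v^k1> ~ <u^k2, v^k1> <= r^k2, so
   F_Q(ub) = lim r^k = min F_Q.  As acos is decreasing, maximising the angle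
   min_v acos <u, v> = acos F_Q(u) is minimising F_Q, which gives Theta. *)

From mathcomp Require Import all_boot all_order all_algebra.
From mathcomp Require Import all_classical all_reals all_analysis.
From mathcomp Require Import ring lra.
Import Order.TTheory GRing.Theory Num.Theory numFieldNormedType.Exports.
Local Open Scope classical_set_scope.
Local Open Scope ring_scope.
Set Implicit Arguments. Unset Strict Implicit. Unset Printing Implicit Defensive.

Section Dotv.
Variables (R : realType) (n : nat).
Implicit Types (a b u v w : 'cV[R]_n).

Lemma dotvC a b : dotv a b = dotv b a.
Proof. by apply: eq_bigr => i _; rewrite mulrC. Qed.

Lemma dotvBr w a b : dotv w (a - b) = dotv w a - dotv w b.
Proof. by rewrite /dotv -sumrB; apply: eq_bigr => i _; rewrite !mxE mulrBr. Qed.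

Lemma dotvNl a b : dotv (- a) b = - dotv a b.
Proof. by rewrite /dotv -sumrN; apply: eq_bigr => i _; rewrite !mxE mulNr. Qed.

Lemma dotvNr a b : dotv a (- b) = - dotv a b.
Proof. by rewrite dotvC dotvNl dotvC. Qed.

Lemma dotvBB a b : dotv (a - b) (a - b) = dotv a a + dotv b b - (dotv a b) *+ 2.
Proof.
rewrite /dotv -sumrMnl -big_split -sumrB /=; apply: eq_bigr => i _; rewrite !mxE.
by rewrite mulr2n; ring.
Qed.

Lemma dotvv_ge0 a : 0 <= dotv a a.
Proof. by apply: sumr_ge0 => i _; rewrite -expr2 sqr_ge0. Qed.

Lemma dotv2_le a b : (dotv a b) *+ 2 <= dotv a a + dotv b b.
Proof. by rewrite -subr_ge0 -dotvBB dotvv_ge0. Qed.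

Lemma sqr_coord_le_dotvv a i : (a i 0) ^+ 2 <= dotv a a.
Proof.
rewrite /dotv (bigD1 i) //= -expr2 lerDl; apply: sumr_ge0 => j _.
by rewrite -expr2 sqr_ge0.
Qed.

Lemma norm_coord_le_vnorm a i : `|a i 0| <= vnorm a.
Proof. by rewrite -sqrtr_sqr /vnorm ler_sqrt ?dotvv_ge0 ?sqr_coord_le_dotvv. Qed.

Lemma sphereE u : sphere u <-> dotv u u = 1.
Proof.
rewrite /sphere /= /vnorm; split => [h|->]; last exact: sqrtr1.
by rewrite -(sqr_sqrtr (dotvv_ge0 u)) h expr1n.
Qed.

Lemma sphere_coord_le1 u i : sphere u -> `|u i 0| <= 1.
Proof. by move=> us; have := norm_coord_le_vnorm u i; rewrite us. Qed.

Lemma sphere_dotv_bound u v : sphere u -> sphere v -> -1 <= dotv u v <= 1.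
Proof.
move=> /sphereE hu /sphereE hv.
have := dotv2_le u v; have := dotv2_le (- u) v.
rewrite !dotvNl !dotvNr opprK hu hv !mulr2n => h1 h2.
by apply/andP; split; lra.
Qed.

Lemma dotv_close w a b e : (forall i, `|w i 0| <= 1) ->
  (forall i, `|a i 0 - b i 0| <= e) -> `|dotv w a - dotv w b| <= n%:R * e.
Proof.
move=> hw hab; rewrite -dotvBr /dotv.
apply: le_trans (ler_norm_sum _ _ _) _.
have -> : n%:R * e = \sum_(i < n) e by rewrite sumr_const card_ord mulr_natl.
apply: ler_sum => i _; rewrite !mxE normrM.
rewrite -[e]mul1r; apply: ler_pM => //; exact: le_trans (normr_ge0 _) (hab i).
Qed.

End Dotv.

Section Real.
Variable R : realType.

Lemma natinv_lt (e : R) : 0 < e ->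
  exists N : nat, forall k, (N <= k)%N -> k.+1%:R^-1 < e.
Proof.
move=> e0; exists (Num.bound e^-1) => k hk.
rewrite -(invrK e) ltf_pV2 ?posrE ?invr_gt0 //.
apply: lt_le_trans (archi_boundP _) _; first by rewrite invr_ge0 ltW.
by rewrite ler_nat; apply: leq_trans hk _.
Qed.

Lemma normr_small_eq0 (a : R) : (forall e, 0 < e -> `|a| <= e) -> a = 0.
Proof.
move=> h; apply/eqP; rewrite -normr_le0; apply/ler_addgt0Pr => e /h.
by rewrite add0r.
Qed.

Lemma exists_mul_le (c e : R) : 0 <= c -> 0 < e -> exists d, 0 < d /\ c * d <= e.
Proof.
move=> c0 e0; have c1 : 0 < c + 1 by apply: lt_le_trans ltr01 _; rewrite lerDr.
exists (e / (c + 1)); split; first exact: divr_gt0.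
by rewrite mulrCA ger_pMr // ler_pdivrMr // mul1r lerDl.
Qed.

Lemma sup_eq_max (E : set R) x : E x -> (forall y, E y -> y <= x) -> sup E = x.
Proof.
move=> Ex hx; apply/eqP; rewrite eq_le; apply/andP; split.
  by apply: ge_sup; [exists x | move=> y /hx].
by apply: ub_le_sup => //; exists x => y /hx.
Qed.

Lemma inf_eq_min (E : set R) x : E x -> (forall y, E y -> x <= y) -> inf E = x.
Proof.
move=> Ex hx; apply/eqP; rewrite eq_le; apply/andP; split.
  by apply: ge_inf => //; exists x => y /hx.
by apply: lb_le_inf; [exists x | move=> y /hx].
Qed.

Lemma ler_acos (a b : R) : -1 <= a -> a <= b -> b <= 1 -> acos b <= acos a.
Proof.
move=> a1 ab b1; rewrite leNgt; apply/negP => h.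
have ha : -1 <= a <= 1 by rewrite a1 /=; apply: le_trans ab b1.
have hb : -1 <= b <= 1 by rewrite b1 andbT; apply: le_trans a1 ab.
have := h; rewrite -ltr_cos ?acosK ?in_itv //=.
- by rewrite ltNge ab.
- all: by rewrite acos_ge0 // acos_lepi.
Qed.

End Real.

Section Approximation.
Variables (R : realType) (p : nat).
Implicit Types (A B : set 'cV[R]_p) (x y z : 'cV[R]_p).

Definition coord_close (e : R) x y := forall i, `|x i 0 - y i 0| < e.

Definition approx_closed A :=
  forall y, (forall e, 0 < e -> exists z, A z /\ coord_close e z y) -> A y.

Definition coord_cluster (u : nat -> 'cV[R]_p) y :=
  forall e, 0 < e -> forall N, exists k, (N <= k)%N /\ coord_close e (u k) y.

Lemma approx_closedI A B : approx_closed A -> approx_closed B ->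
  approx_closed (A `&` B).
Proof.
move=> hA hB y hy; split; [apply: hA | apply: hB] => e /hy [z [[zA zB] hz]];
  by exists z.
Qed.

Lemma bounded_coord_cluster (M : R) (u : nat -> 'cV[R]_p) :
  (forall k i, `|u k i 0| <= M) -> exists y, coord_cluster u y.
Proof.
move=> uM.
have K := @rV_compact R p (fun _ => `[(- M), M]%classic)
  (fun _ => @segment_compact R _ _).
pose w k := (u k)^T.
have Fw : (fmap w \oo)
    [set v : 'rV[R]_p | forall i, `[(- M), M]%classic (v ord0 i)].
  by exists 0%N => // k _ i /=; rewrite mxE /= in_itv /= -ler_norml; exact: uM.
have [q [_ cq]] := K (fmap w \oo) _ Fw.
exists q^T => e e0 N.
have tail_w : (fmap w \oo) [set w k | k in [set k | (N <= k)%N]].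
  by exists N => // k /= kN; exists k.
have := cq _ (ball q e) tail_w (nbhsx_ballx _ _ e0).
case=> _ [[k kN <-] [_ /= bq]]; exists k; split => // i.
by have := bq ord0 i; rewrite !mxE /ball /= distrC.
Qed.

Lemma exists_approx_seq A y :
  (forall e, 0 < e -> exists z, A z /\ coord_close e z y) ->
  exists u : nat -> 'cV[R]_p, forall k, A (u k) /\ coord_close k.+1%:R^-1 (u k) y.
Proof.
move=> h; have hk (k : nat) : 0 < (k.+1%:R : R)^-1 by rewrite invr_gt0 ltr0Sn.
by have [f hf] := choice (fun k => h _ (hk k)); exists f.
Qed.

End Approximation.

Section GeneratedCone.
Variables (R : realType) (p m : nat) (G : 'M[R]_(p, m)).
Implicit Types (I : {set 'I_m}) (x z : 'cV[R]_m) (y : 'cV[R]_p).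

Definition supp_nonneg I x :=
  (forall i, 0 <= x i 0) /\ (forall i, i \notin I -> x i 0 = 0).

Definition gen_cone I := [set G *m x | x in supp_nonneg I].

Lemma supp_nonnegZ I x c : 0 <= c -> supp_nonneg I x -> supp_nonneg I (c *: x).
Proof.
move=> c0 [x0 xI]; split => i; rewrite mxE; first exact: mulr_ge0.
by move=> /xI ->; rewrite mulr0.
Qed.

Lemma supp_nonneg_coord_le_sum I x i :
  supp_nonneg I x -> `|x i 0| <= \sum_j x j 0.
Proof.
by move=> [x0 _]; rewrite ger0_norm // (bigD1 i) //= lerDl; apply: sumr_ge0.
Qed.

Lemma approx_closed_supp_nonneg I : approx_closed (supp_nonneg I).
Proof.
move=> x h; split => i.
  rewrite -oppr_le0; apply/ler_addgt0Pr => e /h [z [[z0 _] /(_ i) hz]].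
  by rewrite add0r; move: hz (z0 i); rewrite ltr_norml => /andP[h1 h2] h3; lra.
move=> iI; apply: normr_small_eq0 => e /h [z [[_ zI] /(_ i) hz]].
by move: hz; rewrite zI // sub0r normrN => /ltW.
Qed.

(* Carathéodory step: shift [x] along a nonnegative kernel vector [z] until a
   coordinate of [I] vanishes. *)
Lemma gen_cone_drop I z y :
  supp_nonneg I z -> z != 0 -> G *m z = 0 -> gen_cone I y ->
  exists2 i, i \in I & gen_cone (I :\ i) y.
Proof.
move=> [z0 zI] zn0 Gz [x [x0 xI] <-].
have [j0 zj0] : exists j, 0 < z j 0.
  apply/not_existsP => h; move/eqP: zn0; apply; apply/matrixP => i j.
  rewrite (ord1 j) mxE; apply/eqP; rewrite eq_le z0 andbT leNgt; apply/negP.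
  exact: h.
have [i zi imin] :=
  @arg_minP _ _ _ j0 (fun j => 0 < z j 0) (fun j => x j 0 / z j 0) zj0.
have iI : i \in I by apply/negPn/negP => /zI hz; move: zi; rewrite hz ltxx.
exists i => //; exists (x - (x i 0 / z i 0) *: z); last first.
  by rewrite mulmxBr -scalemxAr Gz scaler0 subr0.
split => j; rewrite !mxE.
  have [zj|zj] := ltP 0 (z j 0); first by rewrite subr_ge0 -ler_pdivlMr // imin.
  have -> : z j 0 = 0 by apply/eqP; rewrite eq_le zj z0.
  by rewrite mulr0 subr0.
rewrite in_setD1 negb_and negbK => /orP[/eqP ->|jI].
  by rewrite divfK ?subrr // gt_eqF.
by rewrite (xI _ jI) (zI _ jI) mulr0 subr0.
Qed.

Lemma mulmx_coord_bound : exists2 C : R, 0 < C &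
  forall x (e : R), 0 <= e -> (forall i, `|x i 0| <= e) ->
    forall j, `|(G *m x) j 0| <= C * e.
Proof.
have G_ge0 : 0 <= \sum_j \sum_i `|G j i| by do 2!apply: sumr_ge0 => ? _.
exists (1 + \sum_j \sum_i `|G j i|); first by rewrite ltr_pwDl.
move=> x e e0 hx j.
rewrite mxE; apply: le_trans (ler_norm_sum _ _ _) _.
apply: le_trans (_ : \sum_i `|G j i| * e <= _).
  by apply: ler_sum => i _; rewrite normrM ler_wpM2l.
rewrite -mulr_suml ler_wpM2r //.
apply: le_trans (_ : \sum_j \sum_i `|G j i| <= _); last by rewrite lerDr.
by rewrite (bigD1 j) //= lerDl; apply: sumr_ge0 => k _; apply: sumr_ge0.
Qed.

Lemma coord_close_sum x z (e : R) : coord_close e x z ->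
  `|\sum_i x i 0 - \sum_i z i 0| <= m%:R * e.
Proof.
move=> h; rewrite -sumrB; apply: le_trans (ler_norm_sum _ _ _) _.
have -> : m%:R * e = \sum_(i < m) e by rewrite sumr_const card_ord mulr_natl.
by apply: ler_sum => i _; apply/ltW.
Qed.

Lemma mulmx_cluster_eq (xs : nat -> 'cV[R]_m) z y : coord_cluster xs z ->
  (forall k j, `|(G *m xs k) j 0 - y j 0| <= k.+1%:R^-1) -> G *m z = y.
Proof.
move=> hz hx; have [C C0 hC] := mulmx_coord_bound.
apply/matrixP => j j'; rewrite (ord1 j'); apply/eqP; rewrite -subr_eq0; apply/eqP.
apply: normr_small_eq0 => e e0; have e20 : 0 < e / 2 by rewrite divr_gt0.
have [N hN] := natinv_lt e20.
have [k [kN hk]] := hz (e / 2 / C) (divr_gt0 e20 C0) N.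
have Gzk : `|(G *m z) j 0 - (G *m xs k) j 0| <= e / 2.
  have hzk i : `|(z - xs k) i 0| <= e / 2 / C by rewrite !mxE distrC ltW.
  have := hC _ _ (ltW (divr_gt0 e20 C0)) hzk j.
  rewrite [C * _]mulrC divfK ?gt_eqF // mulmxBr => /(le_trans _); apply.
  by rewrite !mxE.
rewrite -(subrK ((G *m xs k) j 0) ((G *m z) j 0)) -addrA (splitr e).
apply: le_trans (ler_normD _ _) _; apply: lerD => //.
by apply: le_trans (hx k j) _; apply/ltW/hN.
Qed.

Lemma kernel_free_lower_bound I :
  ~ (exists z, [/\ supp_nonneg I z, z != 0 & G *m z = 0]) ->
  exists2 d : R, 0 < d & forall x, supp_nonneg I x -> \sum_i x i 0 = 1 ->
    exists j, d <= `|(G *m x) j 0|.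
Proof.
move=> nk; apply: contrapT => H; apply: nk.
have hk (k : nat) : exists x, [/\ supp_nonneg I x, \sum_i x i 0 = 1 &
    forall j, `|(G *m x) j 0| < k.+1%:R^-1].
  apply: contrapT => hk; apply: H; exists k.+1%:R^-1; first by rewrite invr_gt0.
  move=> x hx hs; apply: contrapT => hj; apply: hk; exists x; split => // j.
  by rewrite ltNge; apply/negP => hle; apply: hj; exists j.
have [xs hxs] := choice hk.
have xs_le1 k i : `|xs k i 0| <= 1.
  by have [xsI <- _] := hxs k; apply: supp_nonneg_coord_le_sum xsI.
have [z hz] := bounded_coord_cluster xs_le1.
have zI : supp_nonneg I z.
  apply: approx_closed_supp_nonneg => e e0; have [k [_ hk']] := hz e e0 0%N.
  by exists (xs k); have [] := hxs k.
have zsum : \sum_i z i 0 = 1.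
  apply/eqP; rewrite -subr_eq0; apply/eqP; apply: normr_small_eq0 => e e0.
  have [k [_ hk']] := hz (e / m.+1%:R) (divr_gt0 e0 (ltr0Sn _ _)) 0%N.
  have [_ sk _] := hxs k; have := coord_close_sum hk'; rewrite sk distrC => h.
  apply: le_trans h _; rewrite mulrCA ger_pMr //.
  by rewrite ler_pdivrMr ?ltr0Sn // mul1r ler_nat.
exists z; split => //.
  apply/eqP => z0; move: zsum; rewrite z0 big1 => [|i _]; last by rewrite mxE.
  by move/eqP; rewrite eq_sym oner_eq0.
apply: (mulmx_cluster_eq hz) => k j; rewrite [X in _ - X]mxE subr0.
by have [_ _ /(_ j)/ltW] := hxs k.
Qed.

(* Without a nonnegative kernel vector the coefficients of approximants of a
   bounded point stay bounded, so a cluster point of them represents the limit. *)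
Lemma gen_cone_closed_kernel_free I :
  ~ (exists z, [/\ supp_nonneg I z, z != 0 & G *m z = 0]) ->
  approx_closed (gen_cone I).
Proof.
move=> /kernel_free_lower_bound [d d0 hd] y /exists_approx_seq [us hus].
have coef k : exists x, supp_nonneg I x /\ G *m x = us k.
  by have [[x hx <-] _] := hus k; exists x.
have [xs hxs] := choice coef.
pose Y := \sum_j `|y j 0| + 1.
have Gxs_le k j : `|(G *m xs k) j 0| <= Y.
  rewrite (hxs k).2 -[us k j 0](subrK (y j 0)).
  apply: le_trans (ler_normD _ _) _; rewrite /Y addrC lerD //.
    by rewrite (bigD1 j) //= lerDl sumr_ge0.
  apply: le_trans (ltW ((hus k).2 j)) _.
  by rewrite invf_le1 ?ler1n ?ltr0Sn.
have Y0 : 0 < Y by rewrite ltr_pwDr ?sumr_ge0.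
have sum_xs_le k : \sum_i xs k i 0 <= Y / d.
  set s := \sum_i xs k i 0.
  have s0 : 0 <= s by apply: sumr_ge0 => i _; exact: (hxs k).1.1 i.
  have [->|sn0] := eqVneq s 0; first by rewrite divr_ge0 // ltW.
  have spos : 0 < s by rewrite lt_neqAle eq_sym sn0 s0.
  have ssum : \sum_i (s^-1 *: xs k) i 0 = 1.
    by under eq_bigr do rewrite mxE; rewrite -mulr_sumr mulVf.
  have sV0 : 0 <= s^-1 by rewrite invr_ge0.
  have [j hj] := hd _ (supp_nonnegZ sV0 (hxs k).1) ssum.
  rewrite -scalemxAr mxE normrM ger0_norm // in hj.
  rewrite ler_pdivlMr //; apply: le_trans (Gxs_le k j).
  by have := ler_wpM2l s0 hj; rewrite mulrA mulfV // mul1r.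
have [x hx] : exists x, coord_cluster xs x.
  apply: (@bounded_coord_cluster _ _ (Y / d)) => k i.
  exact: le_trans (supp_nonneg_coord_le_sum i (hxs k).1) (sum_xs_le k).
exists x.
  apply: approx_closed_supp_nonneg => e e0; have [k [_ hk]] := hx e e0 0%N.
  by exists (xs k); split => //; exact: (hxs k).1.
by apply: (mulmx_cluster_eq hx) => k j; rewrite (hxs k).2 ltW // (hus k).2.
Qed.

End GeneratedCone.

Lemma finite_forall_pos_exists (R : realType) (T : finType) (A : T -> R -> Prop) :
  (forall e, 0 < e -> exists i, A i e) ->
  (forall i e e', 0 < e -> e <= e' -> A i e -> A i e') ->
  exists i, forall e, 0 < e -> A i e.
Proof.
move=> h mono; apply: contrapT => H.
have fail i : exists e, 0 < e /\ ~ A i e.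
  apply: contrapT => Hi; apply: H; exists i => e e0.
  by apply: contrapT => nA; apply: Hi; exists e.
have [f hf] := choice fail.
pose e := \big[Order.min/1]_i f i.
have e0 : 0 < e.
  apply: (big_ind (fun x => 0 < x)) => // [a b a0 b0|i _]; last exact: (hf i).1.
  by rewrite lt_min a0 b0.
have [i hi] := h e e0.
by apply: (hf i).2; apply: mono hi => //; rewrite /e (bigD1 i) //= ge_min lexx.
Qed.

(* Induction on the support: if some nonnegative kernel vector exists, every
   approximant already lies in a cone with one generator less, and one such
   generator works for all approximation radii. *)
Lemma gen_cone_closed (R : realType) p m (G : 'M[R]_(p, m)) (I : {set 'I_m}) :
  approx_closed (gen_cone G I).
Proof.
elim: {I}#|I| {-2}I (eqxx #|I|) => [|k IH] I /eqP cardI.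
  apply: gen_cone_closed_kernel_free => -[z [[z0 zI] zn0 _]].
  apply/negP: zn0; rewrite negbK; apply/eqP/matrixP => i j; rewrite (ord1 j) mxE.
  by apply: zI; move: cardI => /cards0_eq ->; rewrite inE.
have [[z [zI zn0 Gz]]|nk] :=
  pselect (exists z, [/\ supp_nonneg I z, z != 0 & G *m z = 0]); last first.
  exact: gen_cone_closed_kernel_free.
move=> y hy.
pose A i e := i \in I /\ exists w, gen_cone G (I :\ i) w /\ coord_close e w y.
have A_ex e : 0 < e -> exists i, A i e.
  move=> e0; have [w [cw hw]] := hy e e0.
  have [i iI ci] := gen_cone_drop zI zn0 Gz cw.
  by exists i; split => //; exists w.
have A_mono i e e' : 0 < e -> e <= e' -> A i e -> A i e'.
  move=> _ le [iI [w [cw hw]]]; split => //; exists w; split => // j.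
  exact: lt_le_trans (hw j) le.
have [i hi] := finite_forall_pos_exists A_ex A_mono.
have iI : i \in I by have [] := hi 1 ltr01.
have [x [x0 xI] <-] : gen_cone G (I :\ i) y.
  apply: (IH (I :\ i)).
    by move: cardI; rewrite (cardsD1 i I) iI add1n => -[->].
  by move=> e e0; have [_ [w hw]] := hi e e0; exists w.
exists x => //; split => // j jI; apply: xI.
by rewrite in_setD1 negb_and jI orbT.
Qed.

Lemma polyhedral_cone_closed (R : realType) p (P : set 'cV[R]_p) :
  polyhedral_cone P -> approx_closed P.
Proof.
move=> [m [G ->]] y hy.
have [x [x0 _] <-] : gen_cone G [set: 'I_m]%SET y.
  apply: gen_cone_closed => e e0; have [z [[x hx <-] hz]] := hy e e0.
  by exists (G *m x); split => //; exists x => //; split => // i; rewrite inE.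
by exists x.
Qed.

Section SphereGeometry.
Variables (R : realType) (n : nat).
Implicit Types (u v w : 'cV[R]_n) (P Q : set 'cV[R]_n).

Definition dotv_argmax Q u v :=
  (Q `&` sphere) v /\ forall w, (Q `&` sphere) w -> dotv u w <= dotv u v.

Lemma cluster_point_coord (uk : nat -> 'cV[R]_n) ub :
  cluster_point uk ub -> coord_cluster uk ub.
Proof.
move=> h e e0 N; have [k [kN hk]] := h e N e0; exists k; split => // i.
by have := norm_coord_le_vnorm (uk k - ub) i; rewrite !mxE => /le_lt_trans; apply.
Qed.

Lemma sphere_approx_closed : approx_closed (@sphere R n).
Proof.
move=> y hy.
have y_le1 i : `|y i 0| <= 1.
  apply/ler_addgt0Pr => e e0; have [z [zs hz]] := hy e e0.
  rewrite -(subrK (z i 0) (y i 0)) addrC; apply: le_trans (ler_normD _ _) _.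
  by rewrite lerD ?sphere_coord_le1 // distrC ltW.
apply/sphereE/eqP; rewrite -subr_eq0; apply/eqP; apply: normr_small_eq0 => e e0.
have [d [d0 hd]] := @exists_mul_le R (n%:R *+ 2) e (mulrn_wge0 _ (ler0n _ _)) e0.
have [z [zs hz]] := hy d d0.
have hyz i : `|y i 0 - z i 0| <= d by rewrite distrC ltW.
have h1 := dotv_close y_le1 hyz.
have := dotv_close (fun i => sphere_coord_le1 i zs) hyz.
rewrite (sphereE z).1 // (dotvC z y) => h2.
rewrite -(subrK (dotv y z) (dotv y y)) -addrA.
apply: le_trans (ler_normD _ _) _; apply: le_trans hd.
by rewrite mulr2n mulrDl lerD.
Qed.

Lemma isProj_dotv_argmax Q u v : sphere u -> isProj (Q `&` sphere) u v ->
  dotv_argmax Q u v.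
Proof.
move=> /sphereE hu [[vQ vs] hv]; split => // w [wQ ws]; have := hv w (conj wQ ws).
rewrite /vnorm ler_sqrt ?dotvv_ge0 // !dotvBB hu !(sphereE _).1 //.
by rewrite (dotvC v u) (dotvC w u) !mulr2n => h; lra.
Qed.

(* The maximum is reached at a cluster point of a maximizing sequence. *)
Lemma exists_dotv_argmax Q u : approx_closed Q -> sphere u ->
  (exists v, (Q `&` sphere) v) -> exists v, dotv_argmax Q u v.
Proof.
move=> hQ us [v0 v0s].
pose E := [set dotv u v | v in Q `&` sphere].
have hE : has_sup E.
  split; first by exists (dotv u v0), v0.
  by exists 1 => _ [w ws <-]; have /andP[] := sphere_dotv_bound us ws.2.
have near_sup k : exists v, (Q `&` sphere) v /\ sup E - k.+1%:R^-1 < dotv u v.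
  have k0 : 0 < (k.+1%:R : R)^-1 by rewrite invr_gt0.
  by have [_ [v vs <-] h] := sup_adherent k0 hE; exists v.
have [vs hvs] := choice near_sup.
have [vb hvb] :=
  bounded_coord_cluster (fun k i => sphere_coord_le1 i (hvs k).1.2).
have vbs : (Q `&` sphere) vb.
  apply: (approx_closedI hQ sphere_approx_closed) => e e0.
  have [k [_ hk]] := hvb e e0 0%N.
  by exists (vs k); split => //; exact: (hvs k).1.
exists vb; split => // w ws; apply: le_trans (_ : sup E <= _).
  by apply: sup_upper_bound => //; exists w.
apply/ler_addgt0Pr => e e0; have e20 : 0 < e / 2 by rewrite divr_gt0.
have [d [d0 hd]] := @exists_mul_le R n%:R (e / 2) (ler0n _ _) e20.
have [N hN] := natinv_lt e20.
have [k [kN hk]] := hvb d d0 N.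
have := dotv_close (fun i => sphere_coord_le1 i us) (fun i => ltW (hk i)).
rewrite ler_norml => /andP[_ h1].
have h2 := (hvs k).2; have h3 := hN k kN.
move: h1 h2 h3 hd; rewrite (splitr e).
set s := sup E; set c := k.+1%:R^-1; set h := e / 2; set g := n%:R * d; lra.
Qed.

Lemma FQ_argmax Q u v : dotv_argmax Q u v -> FQ Q u = dotv u v.
Proof.
move=> [vs hv]; apply: sup_eq_max; first by exists v.
by move=> _ [w ws <-]; exact: hv.
Qed.

Lemma dotv_argmax_acos_min Q u v : sphere u -> dotv_argmax Q u v ->
  forall w, (Q `&` sphere) w -> acos (dotv u v) <= acos (dotv u w).
Proof.
move=> us [vs hv] w ws.
have /andP[w1 _] := sphere_dotv_bound us ws.2.
have /andP[_ v1] := sphere_dotv_bound us vs.2.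
exact: ler_acos w1 (hv w ws) v1.
Qed.

Lemma inner_angle_argmax Q u v : sphere u -> dotv_argmax Q u v ->
  inner_angle Q u = acos (dotv u v).
Proof.
move=> us hv; apply: inf_eq_min; first by exists v => //; case: hv.
by move=> _ [w ws <-]; exact: dotv_argmax_acos_min us hv w ws.
Qed.

Definition FQ_argmin P Q ub :=
  (P `&` sphere) ub /\ forall u, (P `&` sphere) u -> FQ Q ub <= FQ Q u.

Section MaxMin.
Variables P Q : set 'cV[R]_n.
Hypothesis Q_argmax : forall u, sphere u -> exists v, dotv_argmax Q u v.

Lemma FQ_argmin_inner_angle_max ub : FQ_argmin P Q ub ->
  forall u, (P `&` sphere) u -> inner_angle Q u <= inner_angle Q ub.
Proof.
move=> [[_ ubs] ubmin] u [uP us].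
have [v hv] := Q_argmax us; have [vb hvb] := Q_argmax ubs.
rewrite (inner_angle_argmax us hv) (inner_angle_argmax ubs hvb).
have /andP[vb1 _] := sphere_dotv_bound ubs hvb.1.2.
have /andP[_ v1] := sphere_dotv_bound us hv.1.2.
by apply: ler_acos vb1 _ v1; rewrite -(FQ_argmax hv) -(FQ_argmax hvb) ubmin.
Qed.

Lemma FQ_argmin_Theta ub : FQ_argmin P Q ub -> Theta P Q = inner_angle Q ub.
Proof.
move=> hub; apply: sup_eq_max; first by exists ub => //; case: hub.
by move=> _ [u uPS <-]; exact: FQ_argmin_inner_angle_max.
Qed.

End MaxMin.

End SphereGeometry.

Section CuttingPlane.
Variables (R : realType) (n : nat) (P Q : set 'cV[R]_n).
Variables (uk vk : nat -> 'cV[R]_n) (rk : nat -> R).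
Hypotheses (P_closed : approx_closed P) (Q_closed : approx_closed Q).
Hypothesis u0_PS : (P `&` sphere) (uk 0%N).
Hypothesis vk_proj : forall k, isProj (Q `&` sphere) (uk k) (vk k).
Hypothesis uk_sol : forall k, cp_solution P vk k (uk k.+1) (rk k.+1).

Lemma uk_PS k : (P `&` sphere) (uk k).
Proof.
case: k => [//|k]; have [[uP [un _]] _] := uk_sol k; split => //.
by apply/sphereE; rewrite -un /vnorm sqr_sqrtr // dotvv_ge0.
Qed.

Lemma vk_argmax k : dotv_argmax Q (uk k) (vk k).
Proof. exact: isProj_dotv_argmax (uk_PS k).2 (vk_proj k). Qed.

Lemma Q_argmax u : sphere u -> exists v, dotv_argmax Q u v.
Proof.
move=> us; apply: exists_dotv_argmax Q_closed us _.
by exists (vk 0%N); case: (vk_proj 0%N).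
Qed.

(* [(u, F_Q(u))] is feasible for every subproblem. *)
Lemma rk_le_FQ k u : (P `&` sphere) u -> rk k.+1 <= FQ Q u.
Proof.
move=> [uP us]; have [v hv] := Q_argmax us; rewrite (FQ_argmax hv).
have [_ opt] := uk_sol k.
apply: (opt u); rewrite /cp_feasible; split => //; split.
  by rewrite /vnorm sqr_sqrtr ?dotvv_ge0 // (sphereE u).1.
by move=> j _; rewrite dotvC; apply: hv.2 (vk_argmax j).1.
Qed.

Lemma rk_nondecreasing k l : (k <= l)%N -> rk k.+1 <= rk l.+1.
Proof.
move=> /subnK <-; elim: (l - k)%N => [//|d IH]; apply: le_trans IH _.
have [[uP [un cuts]] _] := uk_sol (d + k).+1; have [_ opt] := uk_sol (d + k).
apply: (opt (uk (d + k).+2)); rewrite /cp_feasible; split => //; split => //.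
by move=> j /leqW; apply: cuts.
Qed.

Lemma coord_cluster_PS ub : coord_cluster uk ub -> (P `&` sphere) ub.
Proof.
move=> hub; apply: (approx_closedI P_closed (@sphere_approx_closed R n)) => e e0.
by have [k [_ hk]] := hub e e0 0%N; exists (uk k); split => //; exact: uk_PS.
Qed.

(* Two visits [k1 < k2] of [u^k] near [ub]: the cut [v^k1] is active at [k2],
   and [v^k1] is almost optimal for [ub]. *)
Lemma cluster_FQ_le_rk ub : coord_cluster uk ub ->
  forall eta N, 0 < eta -> exists k, (N <= k)%N /\ FQ Q ub - eta <= rk k.+1.
Proof.
move=> hub eta N eta0; have [vb hvb] := Q_argmax (coord_cluster_PS hub).2.
have [e [e0 he]] := exists_mul_le (mulrn_wge0 3 (ler0n R n)) eta0.
have [k1 [k1N hk1]] := hub e e0 N.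
have [[|k] [k1k hk2]] := hub e e0 k1.+1; first by [].
exists k; split; first exact: leq_trans k1N k1k.
have [[_ [_ /(_ k1 k1k) cut]] _] := uk_sol k.
have near12 i : `|uk k1 i 0 - uk k.+1 i 0| <= e *+ 2.
  rewrite -(subrK (ub i 0) (uk k1 i 0)) -addrA mulr2n.
  apply: le_trans (ler_normD _ _) _.
  by rewrite lerD // ?[`|ub i 0 - _|]distrC ltW.
have near1 i : `|ub i 0 - uk k1 i 0| <= e by rewrite distrC ltW.
have := dotv_close (fun i => sphere_coord_le1 i (vk_argmax k1).1.2) near12.
have := dotv_close (fun i => sphere_coord_le1 i hvb.1.2) near1.
have := (vk_argmax k1).2 vb hvb.1.
rewrite (FQ_argmax hvb) !(dotvC vb) (dotvC (vk k1)) !ler_norml mulrnAr.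
move: cut he; rewrite mulrnAl; set f := n%:R * e; rewrite !mulrS !mulr0n.
set a := dotv ub vb; set b := dotv _ (uk k.+1); set c := dotv (uk k1) _.
lra.
Qed.

Lemma cluster_FQ_argmin ub : coord_cluster uk ub -> FQ_argmin P Q ub.
Proof.
move=> hub; split => [|u uPS]; first exact: coord_cluster_PS.
apply/ler_addgt0Pr => eta eta0; have [k [_ h]] := cluster_FQ_le_rk hub 0 eta0.
by have := rk_le_FQ k uPS; lra.
Qed.

Lemma cluster_rk_cvg ub : coord_cluster uk ub -> rk @ \oo --> FQ Q ub.
Proof.
move=> hub; apply/cvgrPdist_lt => eta eta0.
have eta2 : 0 < eta / 2 by rewrite divr_gt0.
have [k [_ hk]] := cluster_FQ_le_rk hub 0 eta2.
exists k.+1 => // -[//|l] /= hl.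
have := rk_le_FQ l (coord_cluster_PS hub); have := rk_nondecreasing (ltnSE hl).
move=> mono up; rewrite ger0_norm ?subr_ge0 //.
by move: hk; rewrite [in X in _ < X](splitr eta); lra.
Qed.

End CuttingPlane.

Theorem mainTheorem11 (R : realType) (n : nat) (P Q : set 'cV[R]_n)
  (uk vk : nat -> 'cV[R]_n) (rk : nat -> R) :
  polyhedral_cone P -> polyhedral_cone Q ->
  P <> [set 0] -> Q <> [set 0] ->
  (P `&` sphere) (uk 0%N) ->
  (forall k, isProj (Q `&` sphere) (uk k) (vk k)) ->
  (forall k, cp_solution P vk k (uk k.+1) (rk k.+1)) ->
  (forall ub, cluster_point uk ub ->
     ((P `&` sphere) ub /\
      (forall u, (P `&` sphere) u -> FQ Q ub <= FQ Q u)) /\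
     (forall vb, isProj (Q `&` sphere) ub vb ->
        ((P `&` sphere) ub /\
         (forall u, (P `&` sphere) u -> inner_angle Q u <= inner_angle Q ub)) /\
        ((Q `&` sphere) vb /\
         (forall v, (Q `&` sphere) v -> acos (dotv ub vb) <= acos (dotv ub v))) /\
        acos (dotv ub vb) = Theta P Q)) /\
  (rk @ \oo --> cos (Theta P Q)).
Proof.
(* The cones need not be nonzero: [u^1] and [v^1] already lie on the spheres. *)
move=> /polyhedral_cone_closed cP /polyhedral_cone_closed cQ _ _ u0 proj sol.
have Qmax := Q_argmax cQ proj.
have FQmin ub : coord_cluster uk ub -> FQ_argmin P Q ub.
  exact: cluster_FQ_argmin cP cQ u0 proj sol ub.
split=> [ub /cluster_point_coord/FQmin hmin|].
  have ubs := hmin.1.2; split=> // vb hvb.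
  have vbmax := isProj_dotv_argmax ubs hvb.
  split; first by split; [case: hmin | exact: FQ_argmin_inner_angle_max].
  split; first by split; [case: hvb | exact: dotv_argmax_acos_min].
  by rewrite (FQ_argmin_Theta Qmax hmin) (inner_angle_argmax ubs vbmax).
have [ub hub] := bounded_coord_cluster
  (fun k i => sphere_coord_le1 i (uk_PS u0 sol k).2).
have hmin := FQmin ub hub; have ubs := hmin.1.2; have [vb hvb] := Qmax _ ubs.
rewrite (FQ_argmin_Theta Qmax hmin) (inner_angle_argmax ubs hvb).
rewrite acosK ?in_itv /= ?(sphere_dotv_bound ubs hvb.1.2) // -(FQ_argmax hvb).
exact: cluster_rk_cvg cP cQ u0 proj sol ub hub.
Qed.
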